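(* Let $X$ be a real Banach space, $\tau$ the norm or weak topology, and $Y$ a (closed linear) subspace of $X$ such that $(X,Y,\mathcal{F}(X))$ has $\tau$-$\mathscr{F}_{cwm}$-SACP. Then for every $N\in\mathbb{N}$ and every $f:[0,\infty)^N\to[0,\infty)$ in $\mathscr{F}_{cwm}$, the set-valued map $\mathrm{Cent}_Y^f:(\mathcal{F}_N(X),d)\to\mathcal{CB}(Y)$ is metric-$\tau$ upper semicontinuous, i.e., for every $F\in\mathcal{F}_N(X)$ and every $\tau$-open set $W\supseteq\mathrm{Cent}_Y^f(F)$ there is a $d$-open set $U\ni F$ with $\mathrm{Cent}_Y^f(G)\subseteq W$ for all $G\in U$.
   Context: $\mathcal{F}(X)$ is the family of nonempty finite subsets of $X$; $\mathcal{F}_N(X)$ the subsets of cardinality $N$, each written with a fixed enumeration $\{x_1,\dots,x_N\}$, with metric $d(F_1,F_2)=\max_i\|x_i-x_i'\|$. $\mathcal{CB}(Y)$ denotes the closed bounded subsets of $Y$. $\mathscr{F}_{cwm}$ is the class of convex functions $f:[0,\infty)^N\to[0,\infty)$ ($N\in\mathbb{N}$) that are monotone ($a\le b$ coordinatewise implies $f(a)\le f(b)$) and weakly strictly monotone ($a_i<b_i$ for all $i$ implies $f(a)<f(b)$). For $F=\{x_1,\dots,x_N\}$: $r_f(y,F)=f(\|y-x_1\|,\dots,\|y-x_N\|)$, $\mathrm{rad}_Y^f(F)=\inf_{y\in Y}r_f(y,F)$, $\mathrm{Cent}_Y^f(F)=\{y\in Y:r_f(y,F)=\mathrm{rad}_Y^f(F)\}$.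 $(X,Y,\mathcal{F}(X))$ has $\tau$-$\mathscr{F}_{cwm}$-SACP if for every $F\in\mathcal{F}(X)$, every $f\in\mathscr{F}_{cwm}$ on $[0,\infty)^{card(F)}$ and every sequence $(y_n)\subseteq Y$ with $r_f(y_n,F)\to\mathrm{rad}_Y^f(F)$, $(y_n)$ has a $\tau$-convergent subsequence. *)

From HB Require Import structures.
From mathcomp Require Import all_boot all_order all_algebra.
From mathcomp Require Import all_classical all_reals all_analysis.
Set Implicit Arguments. Unset Strict Implicit. Unset Printing Implicit Defensive.
Import Order.TTheory GRing.Theory Num.Theory.
Import numFieldNormedType.Exports.
Local Open Scope classical_set_scope.
Local Open Scope ring_scope.

Section Defs.
Variable R : realType.

Definition nonneg_vec (N : nat) (a : 'I_N -> R) := forall i, 0 <= a i.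

Definition in_Fcwm (N : nat) (f : ('I_N -> R) -> R) : Prop :=
  (forall a, nonneg_vec a -> 0 <= f a) /\
  (forall a b (t : R), nonneg_vec a -> nonneg_vec b -> 0 <= t -> t <= 1 ->
     f (fun i => t * a i + (1 - t) * b i) <= t * f a + (1 - t) * f b) /\
  (forall a b, nonneg_vec a -> nonneg_vec b ->
     (forall i, a i <= b i) -> f a <= f b) /\
  (forall a b, nonneg_vec a -> nonneg_vec b ->
     (forall i, a i < b i) -> f a < f b).

Variable X : normedModType R.

(* ---- Finite sets with a fixed enumeration: injective maps 'I_N -> X ---- *)
Definition is_enum (N : nat) (F : 'I_N -> X) : Prop := injective F.

Definition dist_enum (N : nat) (F G : 'I_N -> X) : R :=
  \big[Num.max/0]_(i < N) `|F i - G i|.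

Definition r_f (N : nat) (f : ('I_N -> R) -> R) (F : 'I_N -> X) (y : X) : R :=
  f (fun i => `|y - F i|).

Definition rad (Y : set X) (N : nat) (f : ('I_N -> R) -> R) (F : 'I_N -> X) : R :=
  inf [set r_f f F y | y in Y].

Definition Cent (Y : set X) (N : nat) (f : ('I_N -> R) -> R) (F : 'I_N -> X)
  : set X := [set y | Y y /\ r_f f F y = rad Y f F].

Definition closed_subspace (Y : set X) : Prop :=
  closed Y /\ Y 0 /\ (forall (a : R) x y, Y x -> Y y -> Y (a *: x + y)).

Definition cont_lin_functional (g : X -> R) : Prop :=
  (forall (a : R) x y, g (a *: x + y) = a * g x + g y) /\ continuous g.

Definition weak_open (W : set X) : Prop :=
  forall x, W x -> exists (k : nat) (g : 'I_k -> X -> R) (e : R),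
    (forall i, cont_lin_functional (g i)) /\ 0 < e /\
    (forall y, (forall i, `|g i y - g i x| < e) -> W y).

End Defs.

Inductive tau_kind := NormTop | WeakTop.

Section Tau.
Variable R : realType.
Variable X : normedModType R.

Definition tau_open (tau : tau_kind) (W : set X) : Prop :=
  match tau with
  | NormTop => open W
  | WeakTop => weak_open W
  end.

Definition tau_cvg (tau : tau_kind) (u : nat -> X) (x : X) : Prop :=
  forall W, tau_open tau W -> W x -> exists n0, forall n, (n0 <= n)%N -> W (u n).

Definition SACP (tau : tau_kind) (Y : set X) : Prop :=
  forall (N : nat) (F : 'I_N -> X) (f : ('I_N -> R) -> R) (u : nat -> X),
    (0 < N)%N -> is_enum F -> in_Fcwm f -> (forall n, Y (u n)) ->
    (fun n => r_f f F (u n)) @ \oo --> rad Y f F ->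
    exists (phi : nat -> nat) (x : X),
      {homo phi : m n / (m < n)%N >-> (m < n)%N} /\ tau_cvg tau (u \o phi) x.

Definition d_open (N : nat) (U : set ('I_N -> X)) : Prop :=
  forall G, U G -> exists e : R, 0 < e /\
    forall G', is_enum G' -> dist_enum G G' < e -> U G'.

Definition Cent_usc (tau : tau_kind) (Y : set X) (N : nat) (f : ('I_N -> R) -> R)
  : Prop :=
  forall F, is_enum F -> forall W, tau_open tau W -> Cent Y f F `<=` W ->
    exists U : set ('I_N -> X), d_open U /\ U F /\ (forall G, U G -> is_enum G) /\
      forall G, U G -> Cent Y f G `<=` W.
End Tau.

From Pilot Require Import Defs.
From mathcomp Require Import all_boot all_order all_algebra.
From mathcomp Require Import all_classical all_reals all_analysis.
From mathcomp Require Import ring lra.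
Set Implicit Arguments. Unset Strict Implicit. Unset Printing Implicit Defensive.
Import Order.TTheory GRing.Theory Num.Theory.
Import numFieldNormedType.Exports.
Local Open Scope classical_set_scope.
Local Open Scope ring_scope.

(* Suppose G_n -> F and y_n in Cent(G_n) lie outside W.  Convexity and
   monotonicity of f give f(b) <= f(a) + d f(a + 1) whenever b <= a + d, and weak
   strict monotonicity keeps centres of nearby sets bounded; together they show
   that centres of nearby sets are almost centres of F, i.e. r_f(y_n, F) -> rad(F).
   By SACP a subsequence tau-converges to some x.  The sublevel sets
   {y in Y | r_f(y, F) <= rad(F) + e} are norm-closed and convex, hence also weakly
   closed (Mazur, through Hahn-Banach), so x lies in Cent(F), which is contained
   in the tau-open set W: a contradiction. *)

Section Fcwm.
Variables (R : realType) (N : nat) (f : ('I_N -> R) -> R).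
Hypothesis hf : in_Fcwm f.

Lemma Fcwm_ge0 a : nonneg_vec a -> 0 <= f a.
Proof. by case: hf => h _; apply: h. Qed.

Lemma Fcwm_convex a b (t : R) : nonneg_vec a -> nonneg_vec b -> 0 <= t -> t <= 1 ->
  f (fun i => t * a i + (1 - t) * b i) <= t * f a + (1 - t) * f b.
Proof. by case: hf => _ [h _]; apply: h. Qed.

Lemma Fcwm_mono a b : nonneg_vec a -> nonneg_vec b ->
  (forall i, a i <= b i) -> f a <= f b.
Proof. by case: hf => _ [_ [h _]]; apply: h. Qed.

Lemma Fcwm_cst_lt : f (fun _ => 0) < f (fun _ => 1).
Proof. by case: hf => _ [_ [_ h]]; apply: h => // i /=. Qed.

(* Convexity along the segment from [a] to [a + 1]. *)
Lemma Fcwm_le_shift a b (d : R) : nonneg_vec a -> nonneg_vec b -> 0 <= d -> d <= 1 ->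
  (forall i, b i <= a i + d) -> f b <= f a + d * f (fun i => a i + 1).
Proof.
move=> a_ge0 b_ge0 d_ge0 d_le1 ba.
have a1_ge0 : nonneg_vec (fun i => a i + 1) by move=> i; have := a_ge0 i; lra.
have ad_ge0 : nonneg_vec (fun i => a i + d) by move=> i; have := a_ge0 i; lra.
apply: le_trans (Fcwm_mono b_ge0 ad_ge0 ba) _.
have -> : (fun i => a i + d) = (fun i => d * (a i + 1) + (1 - d) * a i).
  by apply: funext => i; lra.
apply: le_trans (Fcwm_convex a1_ge0 a_ge0 d_ge0 d_le1) _.
have := Fcwm_ge0 a_ge0; have := Fcwm_ge0 a1_ge0; nra.
Qed.

(* Convexity between the constant vectors [0] and [t]. *)
Lemma Fcwm_coercive b (t : R) : nonneg_vec b -> 1 <= t -> (forall i, t <= b i) ->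
  t * (f (fun _ => 1) - f (fun _ => 0)) <= f b.
Proof.
move=> b_ge0 t_ge1 tb.
have t_gt0 : 0 < t by lra.
have ft : f (fun _ => t) <= f b by apply: Fcwm_mono => // i /=; lra.
have tVt : t^-1 * t = 1 by rewrite mulVf // gt_eqF.
have tV_gt0 : 0 < t^-1 by rewrite invr_gt0.
have tV_le1 : t^-1 <= 1 by nra.
have := Fcwm_convex (a := fun _ => t) (b := fun _ => 0)
  (fun=> ltW t_gt0) (fun=> lexx 0) (ltW tV_gt0) tV_le1.
have -> : (fun _ : 'I_N => t^-1 * t + (1 - t^-1) * 0) = (fun _ => 1).
  by apply: funext => i; rewrite tVt; lra.
move=> /(ler_wpM2l (ltW t_gt0)).
rewrite mulrDr !mulrA mulrBr mulr1 [t * t^-1]mulrC tVt mul1r.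
have := Fcwm_ge0 (a := fun _ => 0) (fun=> lexx 0); nra.
Qed.

Lemma Fcwm_bound b (t B : R) : nonneg_vec b -> 0 <= B ->
  (forall i, t <= b i) -> f b <= B ->
  t <= 1 + B / (f (fun _ => 1) - f (fun _ => 0)).
Proof.
move=> b_ge0 B_ge0 tb fbB; set c := _ - _.
have c_gt0 : 0 < c by rewrite subr_gt0 Fcwm_cst_lt.
have [t_ge1|t_lt1] := lerP 1 t; last by have := divr_ge0 B_ge0 (ltW c_gt0); lra.
have : t <= B / c.
  by rewrite ler_pdivlMr //; apply: le_trans (Fcwm_coercive b_ge0 t_ge1 tb) fbB.
lra.
Qed.

End Fcwm.

Section HahnBanach.
Variables (R : realType) (V : lmodType R) (p : V -> R).
Hypotheses (pD : forall u v, p (u + v) <= p u + p v)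
  (pZ : forall (t : R) u, 0 < t -> p (t *: u) = t * p u).

(* Partial linear functionals dominated by [p], encoded by their graphs. *)
Definition dominated_graph (G : set (V * R)) :=
  [/\ G (0, 0), (forall v a b, G (v, a) -> G (v, b) -> a = b),
      (forall (s : R) v a w b, G (v, a) -> G (w, b) -> G (s *: v + w, s * a + b)) &
      (forall v a, G (v, a) -> a <= p v)].

Lemma dominated_graphZ G s v a : dominated_graph G -> G (v, a) -> G (s *: v, s * a).
Proof. by case=> G00 _ GD _ Gva; have := GD s v a 0 0 Gva G00; rewrite !addr0. Qed.

Lemma dominated_graph_ext_value G v0 : dominated_graph G -> exists c : R,
  forall v a, G (v, a) -> a - p (v - v0) <= c /\ c <= p (v + v0) - a.
Proof.
case=> G00 _ GD Gp.
have sep v a w b : G (v, a) -> G (w, b) -> a - p (v - v0) <= p (w + v0) - b.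
  move=> Gva Gwb; have := Gp _ _ (GD 1 _ _ _ _ Gva Gwb); rewrite scale1r mul1r.
  by have := pD (v - v0) (w + v0); rewrite addrACA addNr addr0; lra.
pose S := [set x | exists v a, G (v, a) /\ x = a - p (v - v0)].
have S_sup : has_sup S.
  split; first by exists (0 - p (0 - v0)), 0, 0.
  by exists (p (0 + v0) - 0) => _ [v [a [Gva ->]]]; exact: sep.
exists (sup S) => v a Gva; split.
  by apply: sup_upper_bound => //; exists v, a.
by apply: ge_sup => [|_ [w [b [Gwb ->]]]]; [exists (a - p (v - v0)), v, a | exact: sep].
Qed.

Lemma dominated_graph_ext_le G v0 c : dominated_graph G ->
  (forall v a, G (v, a) -> a - p (v - v0) <= c /\ c <= p (v + v0) - a) ->
  forall v a t, G (v, a) -> a + t * c <= p (v + t *: v0).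
Proof.
move=> gG c_bounds v a t Gva.
have [t_lt0|t_gt0|->] := ltgtP t 0;
  last by rewrite scale0r mul0r !addr0; case: gG => _ _ _; apply.
- have Nt_gt0 : 0 < - t by rewrite oppr_gt0.
  have [+ _] := c_bounds _ _ (dominated_graphZ (- t)^-1 gG Gva).
  have -> : v + t *: v0 = - t *: ((- t)^-1 *: v - v0).
    by rewrite scalerBr scalerA mulfV ?gt_eqF // scale1r scaleNr opprK.
  rewrite pZ //; move: (p _) => P /(ler_wpM2l (ltW Nt_gt0)).
  by rewrite mulrBr mulrA mulfV ?gt_eqF // mul1r; lra.
- have [_ +] := c_bounds _ _ (dominated_graphZ t^-1 gG Gva).
  have -> : v + t *: v0 = t *: (t^-1 *: v + v0).
    by rewrite scalerDr scalerA mulfV ?gt_eqF // scale1r.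
  rewrite pZ //; move: (p _) => P /(ler_wpM2l (ltW t_gt0)).
  by rewrite mulrBr mulrA mulfV ?gt_eqF // mul1r; lra.
Qed.

Lemma dominated_graph_extend G v0 : dominated_graph G -> ~ (exists a, G (v0, a)) ->
  exists G', [/\ dominated_graph G', G `<=` G' & exists c, G' (v0, c)].
Proof.
move=> gG v0_notin; have [c c_bounds] := dominated_graph_ext_value v0 gG.
have [G00 Gfun GD _] := gG.
pose G' := [set z | exists v a t, G (v, a) /\ z = (v + t *: v0, a + t * c)].
exists G'; split; last 2 first.
- by move=> [v a] Gva; exists v, a, 0; rewrite scale0r mul0r !addr0.
- by exists c, 0, 0, 1; rewrite scale1r mul1r !add0r.
split.
- by exists 0, 0, 0; rewrite scale0r mul0r !addr0.
- move=> _ _ _ [v [a [t [Gva [-> ->]]]]] [w [b [s [Gwb [evw ->]]]]].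
  have [ts|nts] := eqVneq t s.
    by move: evw Gwb; rewrite ts => /addIr <- Gvb; rewrite (Gfun _ _ _ Gva Gvb).
  exfalso; apply: v0_notin.
  have wv : - v + w = (t - s) *: v0.
    have -> : w = v + t *: v0 - s *: v0 by rewrite evw addrK.
    by rewrite scalerBl addrA addKr.
  have := dominated_graphZ (t - s)^-1 gG (GD (-1) _ _ _ _ Gva Gwb).
  rewrite scaleN1r wv scalerA mulVf ?scale1r ?subr_eq0 //.
  by move=> h; eexists; exact: h.
- move=> s _ _ _ _ [v [a [t [Gva [-> ->]]]]] [w [b [u [Gwb [-> ->]]]]].
  exists (s *: v + w), (s * a + b), (s * t + u); split; first exact: GD.
  congr pair; last by ring.
  by rewrite scalerDr scalerA scalerDl addrACA.
- by move=> _ _ [v [a [t [Gva [-> ->]]]]]; exact: (dominated_graph_ext_le gG c_bounds).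
Qed.

(* Zorn's lemma is applied to the sets [H] with [G0 `|` H] dominated, so that *)
(* the union of the empty chain is admissible. *)
Theorem hahn_banach G0 : dominated_graph G0 -> exists g : V -> R,
  [/\ forall (s : R) v w, g (s *: v + w) = s * g v + g w,
      forall v, g v <= p v & forall v a, G0 (v, a) -> g v = a].
Proof.
move=> gG0.
have [A [gA Amax]] : exists A, dominated_graph (G0 `|` A) /\
    forall B, A `<` B -> ~ dominated_graph (G0 `|` B).
  apply: (@Zorn_bigcup _ (fun H => dominated_graph (G0 `|` H))) => F gF Ftot.
  set U := G0 `|` _.
  have common z1 z2 : U z1 -> U z2 ->
      exists S, [/\ dominated_graph S, S z1, S z2 & S `<=` U].
    have sub H : F H -> G0 `|` H `<=` U by move=> FH z [?|?]; [left|right; exists H].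
    move=> [h1|[H1 FH1 h1]] [h2|[H2 FH2 h2]].
    - by exists G0; split => // z; left.
    - by exists (G0 `|` H2); split => //; [exact: gF|left|right|exact: sub].
    - by exists (G0 `|` H1); split => //; [exact: gF|right|left|exact: sub].
    - have [H12|H21] := Ftot _ _ FH1 FH2.
      + by exists (G0 `|` H2); split; [exact: gF|right; exact: H12|right|exact: sub].
      + by exists (G0 `|` H1); split; [exact: gF|right|right; exact: H21|exact: sub].
  split.
  - by left; case: gG0.
  - move=> v a b h1 h2; have [S [[_ Sf _ _] S1 S2 _]] := common _ _ h1 h2.
    exact: Sf S1 S2.
  - move=> s v a w b h1 h2; have [S [[_ _ SD _] S1 S2 SU]] := common _ _ h1 h2.
    exact/SU/SD.
  - by move=> v a h; have [S [[_ _ _ Sp] S1 _ _]] := common _ _ h h; exact: Sp S1.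
have total v : exists a, (G0 `|` A) (v, a).
  apply: contrapT => v_notin.
  have [G' [gG' sub [c G'c]]] := dominated_graph_extend gA v_notin.
  apply: (Amax G'); last by rewrite setUidr // => z Gz; apply: sub; left.
  split; first by move=> z Az; apply: sub; right.
  by move=> AG'; apply: v_notin; exists c; right; exact: AG'.
have [g hg] := choice total.
have [_ Gfun GD Gp] := gA.
exists g; split => [s v w|v|v a G0va].
- exact: Gfun (hg _) (GD _ _ _ _ _ (hg _) (hg _)).
- exact: Gp (hg v).
- by apply: Gfun (hg _) _; left.
Qed.

End HahnBanach.

(* The library's [convex_set] takes weights in [{i01 R}] on [convex_lmodType]. *)
Definition is_convex (R : numDomainType) (V : lmodType R) (C : set V) :=
  forall u v (t : R), C u -> C v -> 0 <= t -> t <= 1 -> C (t *: u + (1 - t) *: v).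

Section Gauge.
Variables (R : realType) (X : normedModType R) (A : set X) (r : R).
Hypotheses (A_convex : is_convex A) (r_gt0 : 0 < r)
  (A_ball : forall v, `|v| < r -> A v).

Definition gauge (v : X) : R := inf [set l : R | 0 < l /\ A (l^-1 *: v)].

Let gauge_set_lb v : has_inf [set l : R | 0 < l /\ A (l^-1 *: v)].
Proof.
split; last by exists 0 => l [l_gt0 _]; exact: ltW.
have l_gt0 : 0 < `|v| / r + 1 by rewrite ltr_wpDl // divr_ge0 // ltW.
exists (`|v| / r + 1); split => //; apply: A_ball.
rewrite normrZ gtr0_norm ?invr_gt0 // mulrC ltr_pdivrMr // mulrDr mulr1.
by rewrite mulrC divfK ?gt_eqF // ltrDl.
Qed.

Lemma gauge_ge0 v : 0 <= gauge v.
Proof. by apply: lb_le_inf; [case: (gauge_set_lb v)|move=> l [l_gt0 _]; exact: ltW]. Qed.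

Lemma gauge_le v l : 0 < l -> A (l^-1 *: v) -> gauge v <= l.
Proof. by move=> l_gt0 Av; apply: ge_inf; [case: (gauge_set_lb v) => _|]. Qed.

Lemma gauge_le_norm v : gauge v <= `|v| / r.
Proof.
apply/ler_addgt0Pr => e e_gt0; have le_gt0 : 0 < `|v| / r + e.
  by rewrite ltr_wpDl // divr_ge0 // ltW.
apply: gauge_le => //; apply: A_ball.
rewrite normrZ gtr0_norm ?invr_gt0 // mulrC ltr_pdivrMr // mulrDr.
by rewrite mulrC divfK ?gt_eqF // ltrDl mulr_gt0.
Qed.

Lemma gaugeD u v : gauge (u + v) <= gauge u + gauge v.
Proof.
apply/ler_addgt0Pr => e e_gt0; have e2_gt0 : 0 < e / 2 by rewrite divr_gt0.
have [l [l_gt0 Au] lu] := inf_adherent e2_gt0 (gauge_set_lb u).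
have [m [m_gt0 Av] mv] := inf_adherent e2_gt0 (gauge_set_lb v).
have lm_gt0 : 0 < l + m by rewrite addr_gt0.
suff : gauge (u + v) <= l + m by rewrite /gauge; lra.
apply: gauge_le => //.
have -> : (l + m)^-1 *: (u + v) =
    l / (l + m) *: (l^-1 *: u) + (1 - l / (l + m)) *: (m^-1 *: v).
  by rewrite !scalerA scalerDr; congr (_ *: _ + _ *: _); field; rewrite !gt_eqF.
apply: (A_convex Au Av); first by rewrite divr_ge0 // ltW.
by rewrite ler_pdivrMr // mul1r lerDl ltW.
Qed.

Lemma gaugeZ (t : R) v : 0 < t -> gauge (t *: v) = t * gauge v.
Proof.
have le_gaugeZ (s : R) w : 0 < s -> gauge (s *: w) <= s * gauge w.
  move=> s_gt0; rewrite -ler_pdivrMl //.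
  apply: lb_le_inf; first by case: (gauge_set_lb w).
  move=> l [l_gt0 Aw]; rewrite ler_pdivrMl //; apply: gauge_le; first exact: mulr_gt0.
  by rewrite scalerA invfM mulrAC mulVf ?gt_eqF ?mul1r.
move=> t_gt0; apply/le_anti; rewrite le_gaugeZ //=.
rewrite -ler_pdivlMl //; have := le_gaugeZ t^-1 (t *: v).
by rewrite scalerA mulVf ?gt_eqF // scale1r; apply; rewrite invr_gt0.
Qed.

Lemma gauge_le1 v : A v -> gauge v <= 1.
Proof. by move=> Av; apply: gauge_le; rewrite ?invr1 ?scale1r. Qed.

Lemma gauge_ge1 v : ~ A v -> 1 <= gauge v.
Proof.
move=> nAv; apply: lb_le_inf; first by case: (gauge_set_lb v).
move=> l [l_gt0 Av]; rewrite leNgt; apply/negP => l_lt1; apply: nAv.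
have A0 : A 0 by apply: A_ball; rewrite normr0.
have := A_convex Av A0 (ltW l_gt0) (ltW l_lt1).
by rewrite scalerA mulfV ?gt_eqF // scale1r scaler0 addr0.
Qed.

Lemma gauge_support_functional z0 : z0 != 0 -> exists g : X -> R,
  [/\ forall (s : R) v w, g (s *: v + w) = s * g v + g w,
      forall v, g v <= gauge v & g z0 = gauge z0].
Proof.
move=> z0_neq0.
pose G0 := [set z : X * R | exists t : R, z = (t *: z0, t * gauge z0)].
have G0_dom : dominated_graph gauge G0.
  split.
  - by exists 0; rewrite scale0r mul0r.
  - move=> _ _ _ [t [-> ->]] [s [/eqP + ->]].
    by rewrite -subr_eq0 -scalerBl scaler_eq0 (negbTE z0_neq0) orbF subr_eq0 => /eqP ->.
  - move=> s _ _ _ _ [t [-> ->]] [u [-> ->]]; exists (s * t + u).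
    by rewrite scalerDl scalerA mulrDl mulrA.
  - move=> _ _ [t [-> ->]]; have [t_lt0|t_gt0|->] := ltgtP t 0.
    + by apply: le_trans _ (gauge_ge0 _); have := gauge_ge0 z0; nra.
    + by rewrite gaugeZ.
    + by rewrite mul0r scale0r gauge_ge0.
have [g [g_lin g_le g_ext]] := hahn_banach gaugeD (fun t v => @gaugeZ t v) G0_dom.
by exists g; split => //; apply: g_ext; exists 1; rewrite scale1r mul1r.
Qed.

End Gauge.

Section LinearFunctional.
Variables (R : pzRingType) (V : lmodType R) (g : V -> R).
Hypothesis g_lin : forall (s : R) v w, g (s *: v + w) = s * g v + g w.

Lemma lin_functional0 : g 0 = 0.
Proof. by apply: (addrI (g 0)); rewrite addr0 -{1}(mul1r (g 0)) -g_lin scaler0 addr0. Qed.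

Lemma lin_functionalZ s v : g (s *: v) = s * g v.
Proof. by have := g_lin s v 0; rewrite !addr0 lin_functional0 addr0. Qed.

Lemma lin_functionalB u v : g (u - v) = g u - g v.
Proof. by rewrite -scaleN1r addrC g_lin mulN1r addrC. Qed.

End LinearFunctional.

Section Separation.
Variables (R : realType) (X : normedModType R).

Lemma cont_lin_functional_of_le (g : X -> R) (r : R) : 0 < r ->
  (forall (s : R) v w, g (s *: v + w) = s * g v + g w) ->
  (forall v, g v <= `|v| / r) -> cont_lin_functional g.
Proof.
move=> r_gt0 g_lin g_le; split=> // v.
have g_norm w : `|g w| <= `|w| / r.
  rewrite ler_norml g_le andbT lerNl -mulN1r -(lin_functionalZ g_lin).
  by rewrite scaleN1r -(normrN w) g_le.
apply/cvgrPdist_lt => e e_gt0; rewrite nearE; apply/nbhs_ballP.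
exists (r * e) => [|w]; first by rewrite /= mulr_gt0.
rewrite -ball_normE /= -(lin_functionalB g_lin) => vw.
by apply: le_lt_trans (g_norm _) _; rewrite ltr_pdivrMr // mulrC.
Qed.

Lemma is_convex_ball_hull (C : set X) (r : R) : is_convex C ->
  is_convex [set v | exists2 c, C c & `|v - c| < r].
Proof.
move=> C_convex u v t [c1 Cc1 uc1] [c2 Cc2 vc2] t_ge0 t_le1.
exists (t *: c1 + (1 - t) *: c2); first exact: C_convex.
have -> : t *: u + (1 - t) *: v - (t *: c1 + (1 - t) *: c2) =
    t *: (u - c1) + (1 - t) *: (v - c2).
  by rewrite !scalerBr addrACA opprD.
apply: le_lt_trans (ler_normD _ _) _.
rewrite !normrZ !ger0_norm ?subr_ge0 //.
have [->|t_gt0] := eqVneq t 0; first by rewrite mul0r add0r subr0 mul1r.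
have : t * `|u - c1| < t * r by rewrite ltr_pM2l // lt_def t_gt0.
have := ler_wpM2l (_ : 0 <= 1 - t) (ltW vc2); rewrite subr_ge0 => /(_ t_le1).
lra.
Qed.

(* Mazur: a linear functional below the gauge of the open [r]-neighbourhood [A]  *)
(* of [C - c0] and equal to it at [x - c0] is [<= 1] on [A] and [>= 1] at         *)
(* [x - c0]; since [C - c0] shifted by a small multiple of [x - c0] stays inside  *)
(* [A], this gives a uniform margin.                                             *)
Lemma convex_separation (C : set X) (x c0 : X) (r : R) :
  is_convex C -> C c0 -> 0 < r -> (forall c, C c -> r <= `|x - c|) ->
  exists (g : X -> R) (eta : R), cont_lin_functional g /\ 0 < eta /\
    forall c, C c -> g c <= g x - eta.
Proof.
move=> C_convex Cc0 r_gt0 C_far.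
pose A := [set v | exists2 c, C c & `|v + c0 - c| < r].
have A_convex : is_convex A.
  move=> u v t Au Av t_ge0 t_le1; rewrite /A /=.
  have -> : t *: u + (1 - t) *: v + c0 = t *: (u + c0) + (1 - t) *: (v + c0).
    by rewrite !scalerDr addrACA -scalerDl subrKC scale1r.
  exact: (is_convex_ball_hull (r := r) C_convex Au Av).
have A_ball v : `|v| < r -> A v by exists c0; rewrite // addrK.
pose z0 := x - c0.
have z0_notin : ~ A z0.
  by move=> [c Cc]; rewrite /z0 subrK; have := C_far c Cc; lra.
have z0_neq0 : z0 != 0.
  by apply: contra_notN z0_notin => /eqP ->; apply: A_ball; rewrite normr0.
have [g [g_lin g_le gz0]] := gauge_support_functional A_convex r_gt0 A_ball z0_neq0.
have g_le_norm v : g v <= `|v| / r := le_trans (g_le v) (gauge_le_norm r_gt0 A_ball v).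
have gauge_z0_ge1 : 1 <= gauge A z0 := gauge_ge1 A_convex r_gt0 A_ball z0_notin.
pose eta := r / 2 / `|z0|.
have z0_gt0 : 0 < `|z0| by rewrite normr_gt0.
have eta_gt0 : 0 < eta by rewrite !divr_gt0.
exists g, eta; split; first exact: cont_lin_functional_of_le r_gt0 g_lin g_le_norm.
split=> // c Cc.
have A_shift : A (c - c0 + eta *: z0).
  exists c => //; rewrite [_ + c0]addrAC subrK addrAC subrr add0r normrZ.
  by rewrite gtr0_norm // /eta divfK ?gt_eqF //; lra.
have := le_trans (g_le _) (gauge_le1 r_gt0 A_ball A_shift).
rewrite addrC g_lin gz0 (lin_functionalB g_lin).
have : g x - g c0 = gauge A z0 by rewrite -(lin_functionalB g_lin) gz0.
have := ler_wpM2l (ltW eta_gt0) gauge_z0_ge1; rewrite mulr1.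
lra.
Qed.

End Separation.

Section TauClosed.
Variables (R : realType) (X : normedModType R).

Lemma weak_open_halfspace (g : X -> R) (a : R) :
  cont_lin_functional g -> weak_open [set z | a < g z].
Proof.
move=> g_cl z /= gz; exists 1%N, (fun _ => g), (g z - a).
split=> [//|]; split=> [|y /(_ ord0)]; first by rewrite subr_gt0.
by rewrite ltr_norml => /andP[+ _]; lra.
Qed.

Lemma tau_cvg_closed_convex (tau : tau_kind) (C : set X) (u : nat -> X) (x : X) :
  closed C -> is_convex C -> (\forall n \near \oo, C (u n)) -> tau_cvg tau u x -> C x.
Proof.
move=> C_closed C_convex Cu ux; apply: contrapT => Cx.
have [W [W_open Wx WC]] : exists W, [/\ tau_open tau W, W x & forall z, W z -> ~ C z].
  have xCo : nbhs x (~` C) by move: (closed_openC C_closed); rewrite openE; apply.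
  case: tau {ux}; first by exists (~` C); split => //; exact: closed_openC.
  move/nbhs_ballP: xCo => [r /= r_gt0 rC].
  have C_far c : C c -> r <= `|x - c|.
    move=> Cc; rewrite leNgt; apply/negP => xc.
    by apply: (rC c) => //; rewrite -ball_normE.
  have [c0 Cc0] : exists c0, C c0 by have [n Cn] := filter_ex Cu; exists (u n).
  have [g [eta [g_cl [eta_gt0 g_sep]]]] := convex_separation C_convex Cc0 r_gt0 C_far.
  exists [set z | g x - eta < g z]; split => /=; first exact: weak_open_halfspace.
    by rewrite ltrBlDr ltrDl.
  by move=> z gz /g_sep; lra.
have [n0 _ Cu_n0] := Cu; have [n1 Wu_n1] := ux W W_open Wx.
exact: WC (Wu_n1 _ (leq_maxr n0 n1)) (Cu_n0 _ (leq_maxl n0 n1)).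
Qed.

End TauClosed.

Section EnumDist.
Variables (R : realType) (X : normedModType R) (N : nat).
Implicit Types F G H : 'I_N -> X.

Lemma dist_enum_ge F G i : `|F i - G i| <= dist_enum F G.
Proof. exact: (le_bigmax _ (fun i => `|F i - G i|)). Qed.

Lemma dist_enum_ge0 F G : 0 <= dist_enum F G.
Proof. exact: bigmax_ge_id. Qed.

Lemma dist_enum_le F G (r : R) : 0 <= r -> (forall i, `|F i - G i| <= r) ->
  dist_enum F G <= r.
Proof. by move=> r_ge0 FG; apply: bigmax_le. Qed.

Lemma dist_enum_triangle F G H : dist_enum F H <= dist_enum F G + dist_enum G H.
Proof.
apply: dist_enum_le => [|i]; first by rewrite addr_ge0 ?dist_enum_ge0.
by apply: le_trans (ler_distD (G i) _ _) _; rewrite lerD ?dist_enum_ge.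
Qed.

End EnumDist.

Section Centers.
Variables (R : realType) (X : normedModType R) (Y : set X) (N : nat)
  (f : ('I_N -> R) -> R).
Hypotheses (hY : closed_subspace Y) (hf : in_Fcwm f).
Implicit Types (F G : 'I_N -> X) (y w : X).

Lemma dist_vec_ge0 F y : nonneg_vec (fun i => `|y - F i|).
Proof. by move=> i. Qed.

Lemma r_f_ge0 F y : 0 <= r_f f F y.
Proof. exact: (Fcwm_ge0 hf (dist_vec_ge0 F y)). Qed.

Let r_f_has_inf F : has_inf [set r_f f F y | y in Y].
Proof.
split; first by exists (r_f f F 0), 0 => //; case: hY => _ [].
by exists 0 => _ [y _ <-]; exact: r_f_ge0.
Qed.

Lemma rad_le F y : Y y -> Defs.rad Y f F <= r_f f F y.
Proof. by move=> Yy; apply: ge_inf; [case: (r_f_has_inf F)|exists y]. Qed.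

Lemma rad_approx F (e : R) : 0 < e -> exists2 z, Y z & r_f f F z < Defs.rad Y f F + e.
Proof.
by move=> e_gt0; have [_ [z Yz <-]] := inf_adherent e_gt0 (r_f_has_inf F); exists z.
Qed.

Lemma r_f_shift F G y w (d : R) : 0 <= d -> d <= 1 ->
  (forall i, `|y - G i| <= `|w - F i| + d) ->
  r_f f G y <= r_f f F w + d * f (fun i => `|w - F i| + 1).
Proof. exact: (Fcwm_le_shift hf (dist_vec_ge0 F w) (dist_vec_ge0 G y)). Qed.

Lemma r_f_continuous F : continuous (r_f f F).
Proof.
move=> w; apply/cvgrPdist_le => e e_gt0.
pose K := f (fun i => `|w - F i| + 2).
have K_ge0 : 0 <= K by apply: (Fcwm_ge0 hf) => i; rewrite addr_ge0.
pose delta := Num.min 1 (e / (K + 1)).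
have delta_gt0 : 0 < delta by rewrite lt_min ltr01 divr_gt0 //; lra.
apply/nbhs_ballP; exists delta => // v; rewrite -ball_normE /= => wv.
set d := `|w - v|; have d_ge0 : 0 <= d := normr_ge0 _.
have d_le1 : d <= 1 by apply: ltW; apply: lt_le_trans wv _; rewrite ge_min lexx.
have dK_le : d * K <= e.
  have : d <= e / (K + 1).
    by apply: ltW; apply: lt_le_trans wv _; rewrite ge_min lexx orbT.
  by rewrite ler_pdivlMr; [nra|lra].
have K_bound u : `|w - u| <= 1 -> f (fun i => `|u - F i| + 1) <= K.
  move=> wu; apply: (Fcwm_mono hf) => i /=; rewrite ?addr_ge0 //.
  by have := ler_distD w u (F i); rewrite [`|u - w|]distrC; lra.
have vw : r_f f F v <= r_f f F w + d * K.
  apply: le_trans (r_f_shift d_ge0 d_le1 _) _ => [i|].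
    by apply: le_trans (ler_distD w v (F i)) _; rewrite addrC [`|v - w|]distrC.
  by rewrite lerD2l ler_wpM2l // K_bound // subrr normr0.
have wv' : r_f f F w <= r_f f F v + d * K.
  apply: le_trans (r_f_shift d_ge0 d_le1 _) _ => [i|].
    by apply: le_trans (ler_distD v w (F i)) _; rewrite addrC.
  by rewrite lerD2l ler_wpM2l // K_bound.
rewrite ler_norml; apply/andP; split; lra.
Qed.

Lemma sublevel_closed F (c : R) : closed [set v | Y v /\ r_f f F v <= c].
Proof.
apply: closedI; first by case: hY.
exact: (proj1 (continuous_closedP _) (@r_f_continuous F) _ (closed_le (y := c))).
Qed.

Lemma sublevel_convex F (c : R) : is_convex [set v | Y v /\ r_f f F v <= c].
Proof.
move=> u v t [Yu ru] [Yv rv] t_ge0 t_le1; have [_ [Y0 Ylin]] := hY; split.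
  by apply: (Ylin) => //; have := Ylin (1 - t) v 0 Yv Y0; rewrite addr0.
have r_f_conv : r_f f F (t *: u + (1 - t) *: v) <=
    f (fun i => t * `|u - F i| + (1 - t) * `|v - F i|).
  apply: (Fcwm_mono hf) => i /=; rewrite ?addr_ge0 ?mulr_ge0 ?subr_ge0 //.
  have -> : t *: u + (1 - t) *: v - F i = t *: (u - F i) + (1 - t) *: (v - F i).
    by rewrite !scalerBr addrACA -opprD -scalerDl subrKC scale1r.
  by apply: le_trans (ler_normD _ _) _; rewrite !normrZ !ger0_norm ?subr_ge0.
apply: le_trans r_f_conv (le_trans (Fcwm_convex hf (dist_vec_ge0 F u) (dist_vec_ge0 F v)
  t_ge0 t_le1) _).
have := ler_wpM2l t_ge0 ru; have := ler_wpM2l (_ : 0 <= 1 - t) rv.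
rewrite subr_ge0 => /(_ t_le1); rewrite /r_f; lra.
Qed.

Lemma Cent_of_tau_limit tau F (u : nat -> X) x : (forall n, Y (u n)) ->
  (fun n => r_f f F (u n)) @ \oo --> Defs.rad Y f F -> tau_cvg tau u x -> Cent Y f F x.
Proof.
move=> Yu ru ux.
have sublevel e : 0 < e -> Y x /\ r_f f F x <= Defs.rad Y f F + e.
  move=> e_gt0.
  apply: (tau_cvg_closed_convex (@sublevel_closed F _) (@sublevel_convex F _) _ ux).
  move/cvgrPdist_le: ru => /(_ e e_gt0); apply: filterS => n.
  by rewrite ler_distlC => /andP[_ run]; split.
have [Yx _] := sublevel 1 ltr01; split => //.
apply/le_anti; rewrite rad_le // andbT; apply/ler_addgt0Pr => e e_gt0.
by have [] := sublevel e e_gt0.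
Qed.

Lemma Cent_near_bounded F : exists2 M : R, 0 <= M & forall G y,
  (forall i, `|F i - G i| <= 1) -> Cent Y f G y -> forall j, `|y - G j| <= M.
Proof.
pose B := f (fun i => `|F i| + 1).
pose D := \big[Num.max/0]_i `|F i|.
have B_ge0 : 0 <= B by apply: (Fcwm_ge0 hf) => i; rewrite addr_ge0.
have c_gt0 : 0 < f (fun _ => 1) - f (fun _ => 0) by rewrite subr_gt0 (Fcwm_cst_lt hf).
have D_ge0 : 0 <= D by exact: bigmax_ge_id.
exists (1 + B / (f (fun _ => 1) - f (fun _ => 0)) + (2 * D + 2)) => [|G y FG [Yy ry] j].
  by have := divr_ge0 B_ge0 (ltW c_gt0); lra.
have G_le i : `|G i| <= `|F i| + 1.
  by have := ler_distD (F i) (G i) 0; rewrite !subr0 distrC; have := FG i; lra.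
have ryB : r_f f G y <= B.
  have Y0 : Y 0 by case: hY => _ [].
  rewrite ry; apply: le_trans (rad_le G Y0) _.
  by apply: (Fcwm_mono hf) => i /=; rewrite ?addr_ge0 // sub0r normrN G_le.
have GG i : `|G i - G j| <= 2 * D + 2.
  have FD k : `|F k| <= D by exact: (le_bigmax _ (fun k => `|F k|)).
  have := ler_normB (G i) (G j); have := G_le i; have := G_le j.
  have := FD i; have := FD j; lra.
suff : `|y - G j| - (2 * D + 2) <= 1 + B / (f (fun _ => 1) - f (fun _ => 0)) by lra.
apply: (Fcwm_bound hf (dist_vec_ge0 G y) B_ge0 _ ryB) => i.
by have := ler_distD (G i) y (G j); have := GG i; lra.
Qed.

Lemma Cent_near_rad F (e : R) : 0 < e -> exists2 delta : R, 0 < delta &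
  forall G y, dist_enum F G < delta -> Cent Y f G y -> r_f f F y <= Defs.rad Y f F + e.
Proof.
move=> e_gt0; have e2_gt0 : 0 < e / 2 by rewrite divr_gt0.
have [z Yz rz] := rad_approx F e2_gt0.
have [M M_ge0 M_bound] := Cent_near_bounded F.
pose Kz := f (fun i => `|z - F i| + 1); pose KM := f (fun _ : 'I_N => M + 1).
have Kz_ge0 : 0 <= Kz by apply: (Fcwm_ge0 hf) => i; rewrite addr_ge0.
have KM_ge0 : 0 <= KM by apply: (Fcwm_ge0 hf) => i; rewrite addr_ge0.
have K1_gt0 : 0 < Kz + KM + 1 by lra.
exists (Num.min 1 (e / 2 / (Kz + KM + 1))) => [|G y FG [Yy ry]].
  by rewrite lt_min ltr01 !divr_gt0.
set d := dist_enum F G; have d_ge0 : 0 <= d := dist_enum_ge0 F G.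
have d_le1 : d <= 1 by apply: ltW; apply: lt_le_trans FG _; rewrite ge_min lexx.
have dK : d * Kz + d * KM <= e / 2.
  have : d <= e / 2 / (Kz + KM + 1).
    by apply: ltW; apply: lt_le_trans FG _; rewrite ge_min lexx orbT.
  by rewrite ler_pdivlMr // => ?; nra.
have FGd i : `|F i - G i| <= d := dist_enum_ge F G i.
have ry_le : r_f f F y <= r_f f G y + d * KM.
  apply: le_trans (r_f_shift (F := G) (w := y) d_ge0 d_le1 _) _ => [i|].
    by apply: le_trans (ler_distD (G i) y (F i)) _; rewrite lerD2l distrC.
  rewrite lerD2l ler_wpM2l //; apply: (Fcwm_mono hf) => i /=; rewrite ?addr_ge0 //.
  by rewrite lerD2r (M_bound G y) // => k; apply: le_trans (FGd k) d_le1.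
have radG : Defs.rad Y f G <= r_f f F z + d * Kz.
  apply: le_trans (rad_le G Yz) (r_f_shift d_ge0 d_le1 _) => i.
  by apply: le_trans (ler_distD (F i) z (G i)) _; rewrite lerD2l.
rewrite ry in ry_le; lra.
Qed.

Lemma Cent_seq_cvg_rad F (Gs : nat -> 'I_N -> X) (ys : nat -> X) :
  (forall n, dist_enum F (Gs n) < n.+1%:R^-1) -> (forall n, Cent Y f (Gs n) (ys n)) ->
  (fun n => r_f f F (ys n)) @ \oo --> Defs.rad Y f F.
Proof.
move=> FG Cy; apply/cvgrPdist_le => e e_gt0.
have [delta delta_gt0 near_rad] := Cent_near_rad F e_gt0.
near=> n.
have n_large : n.+1%:R^-1 < delta.
  rewrite invf_plt ?posrE ?ltr0n //; near: n.
  by apply: filterS (nbhs_infty_ger delta^-1) => n /le_lt_trans; apply; rewrite ltr_nat.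
have := near_rad _ _ (lt_trans (FG n) n_large) (Cy n).
by rewrite distrC ger0_norm ?subr_ge0 ?(rad_le F (Cy n).1) //; lra.
Unshelve. all: end_near.
Qed.

End Centers.

Lemma cvg_subseq (T : topologicalType) (u : nat -> T) (phi : nat -> nat) (l : T) :
  {homo phi : m n / (m < n)%N >-> (m < n)%N} -> u @ \oo --> l -> (u \o phi) @ \oo --> l.
Proof.
move=> phi_incr; apply: cvg_comp; apply/cvgnyPge => A; exists A => // n /= An.
apply: leq_trans An _; elim: n => // n IH.
exact: leq_ltn_trans IH (phi_incr _ _ (ltnSn n)).
Qed.

Lemma usc_of_sequential (R : realType) (X : normedModType R) (N : nat)
    (tau : tau_kind) (Phi : ('I_N -> X) -> set X) (F : 'I_N -> X) :
  is_enum F ->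
  (forall (Gs : nat -> 'I_N -> X) (ys : nat -> X),
     (forall n, dist_enum F (Gs n) < n.+1%:R^-1) -> (forall n, Phi (Gs n) (ys n)) ->
     exists (phi : nat -> nat) (x : X), tau_cvg tau (ys \o phi) x /\ Phi F x) ->
  forall W, tau_open tau W -> Phi F `<=` W ->
  exists U : set ('I_N -> X), d_open U /\ U F /\ (forall G, U G -> is_enum G) /\
    forall G, U G -> Phi G `<=` W.
Proof.
move=> eF cluster W W_open PhiW; apply: contrapT => no_U.
have bad n : exists q : ('I_N -> X) * X,
    [/\ dist_enum F q.1 < n.+1%:R^-1, Phi q.1 q.2 & ~ W q.2].
  apply: contrapT => no_q; apply: no_U.
  exists [set G | is_enum G /\ dist_enum F G < n.+1%:R^-1]; split; [|split; [|split]].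
  - move=> G [eG FG]; exists (n.+1%:R^-1 - dist_enum F G); rewrite subr_gt0.
    split=> // G' eG' GG'; split => //.
    by apply: le_lt_trans (dist_enum_triangle F G G') _; rewrite -ltrBrDl.
  - split=> //; apply: le_lt_trans (_ : dist_enum F F <= 0) _.
      by apply: dist_enum_le => // i; rewrite subrr normr0.
    by rewrite invr_gt0 ltr0n.
  - by move=> G [].
  - by move=> G [eG FG] y PhiGy; apply: contrapT => nWy; apply: no_q; exists (G, y).
have [q /all_and3 [FG PhiG notW]] := choice bad.
have [phi [x [ux PhiFx]]] := cluster _ _ FG PhiG.
have [n0 Wu] := ux W W_open (PhiW _ PhiFx).
exact: notW (Wu n0 (leqnn n0)).
Qed.

Theorem theorem4p5 (R : realType) (X : completeNormedModType R)
  (tau : tau_kind) (Y : set X) :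
  closed_subspace Y -> SACP tau Y ->
  forall (N : nat) (f : ('I_N -> R) -> R), (0 < N)%N -> in_Fcwm f ->
    Cent_usc tau Y f.
Proof.
move=> hY hS N f N_gt0 hf F eF; apply: (usc_of_sequential eF) => Gs ys FG Cy.
have r_cvg := Cent_seq_cvg_rad hY hf FG Cy.
have [phi [x [phi_incr ux]]] := hS N F f ys N_gt0 eF hf (fun n => (Cy n).1) r_cvg.
exists phi, x; split => //.
exact: (Cent_of_tau_limit hY hf (fun n => (Cy (phi n)).1) (cvg_subseq phi_incr r_cvg) ux).
Qed.
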